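(* Let $\mathbb K$ be a naturally ordered positive semiring, $q$ a self-join-free conjunctive query, and $\Sigma$ a set of key constraints with one key per relation of $q$. Let $\mathfrak D$ be a $\mathbb K$-database and $\gamma$ an assignment such that $\mathfrak D',\gamma\models_{\mathbb K} q$ for every repair $\mathfrak D'\in\mathrm{Rep}(\mathfrak D,\Sigma)$, and let $x$ be a variable that is bound in $q$ and unattacked in $q$. Then there is an element $c\in D$ such that $\mathfrak D',\gamma(c/x)\models_{\mathbb K} q[x]$ for every repair $\mathfrak D'$ of $\mathfrak D$.
   Context: Semirings. A commutative semiring $\mathbb K=(K,+,\times,0,1)$ is positive if $a+b=0$ implies $a=b=0$ and it has no zero divisors; naturally ordered if $a\le_{\mathbb K}b:\iff\exists c\,(a+c=b)$ is a total order. Databases. A $\mathbb K$-database $\mathfrak D$ assigns to each relation symbol $R$ a function $R^{\mathfrak D}:\mathrm A^n\to K$ with finite support $\mathrm{Supp}(R^{\mathfrak D})=\{t:R^{\mathfrak D}(t)\neq0\}$; the active domain $D$ is the non-empty set of values occurring in supports. $\mathfrak D'\subseteq\mathfrak D$ means supports are included and values agree on the support of $\mathfrak D'$. An assignment maps variables to $D$; $\gamma(c/x)$ agrees with $\gamma$ except mapping $x$ to $c$. Keys and repairs. Atoms are written $R(\vec y;\vec z)$ with key positions $\vec y$; $\mathfrak D$ satisfies the key of $R$ if two tuples of $\mathrm{Supp}(R^{\mathfrak D})$ that agree on key positions are equal. A repair of $\mathfrak D$ w.r.t. $\Sigma$ is a $\mathbb K$-database $\mathfrak D'\subseteq\mathfrak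 D$ satisfying $\Sigma$ such that no $\mathfrak D''$ with $\mathfrak D'\subsetneq\mathfrak D''\subseteq\mathfrak D$ satisfies $\Sigma$. CQs. $q(\vec x)=\exists\vec y(R_1(\vec z_1)\wedge\dots\wedge R_k(\vec z_k))$ has value $q(\mathfrak D,\alpha)=\sum_{\vec a\in D^{|\vec y|}}\prod_iR_i^{\mathfrak D}(\beta(\vec z_i))$, $\beta=\alpha(\vec a/\vec y)$, and $\mathfrak D,\alpha\models_{\mathbb K}q$ means $q(\mathfrak D,\alpha)\neq 0$. $q[x]$ is $q$ with the quantifier $\exists x$ removed. Attacks. For an atom $R(\vec y;\vec z)$ of $q$, $\Sigma(q\setminus R)$ is the set of functional dependencies $\mathrm{key}(S)\to\mathsf{var}(S)$ for the atoms $S\neq R$ of $q$ (where $\mathrm{key}(S)$ is the set of variables in key positions of $S$), and $\mathsf{var}(\vec y)^+_{\Sigma(q\setminus R)}$ is the set of variables $v$ of $q$ with $\Sigma(q\setminus R)\models\mathsf{var}(\vec y)\to v$. $R(\vec y;\vec z)$ attacks a variable $x$ bound in $q$ if there is a non-empty sequence $x_1,\dots,x_n$ of variables bound in $q$ with $x_1\in\mathsf{var}(\vec z)$, $x_n=x$, consecutive variables co-occurring in some atom of $q$, and no $x_i$ belonging to $\mathsf{var}(\vec y)^+_{\Sigma(q\setminus R)}$. $x$ is unattacked if no atom attacks it. *)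

From HB Require Import structures.
From mathcomp Require Import all_boot all_order all_algebra.
From mathcomp Require Import finmap.
Set Implicit Arguments. Unset Strict Implicit. Unset Printing Implicit Defensive.
Import Order.TTheory GRing.Theory.
Local Open Scope ring_scope.

Definition positive_semiring (K : comPzSemiRingType) : Prop :=
  (forall a b : K, a + b = 0 -> a = 0 /\ b = 0) /\
  (forall a b : K, a * b = 0 -> a = 0 \/ b = 0).

Definition nat_le (K : comPzSemiRingType) (a b : K) : Prop := exists c, a + c = b.

Definition naturally_ordered (K : comPzSemiRingType) : Prop :=
  (forall a : K, nat_le a a) /\
  (forall a b c : K, nat_le a b -> nat_le b c -> nat_le a c) /\
  (forall a b : K, nat_le a b -> nat_le b a -> a = b) /\
  (forall a b : K, nat_le a b \/ nat_le b a).

Definition kdb (Sym : finType) (ar : Sym -> nat) (A : choiceType)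
  (K : comPzSemiRingType) : Type :=
  forall R : Sym, {fsfun (ar R).-tuple A -> K with 0}.

Section DB.
Variables (Sym : finType) (ar : Sym -> nat) (A : choiceType) (K : comPzSemiRingType).
Notation db := (kdb ar A K).

Definition adom (D : db) : {fset A} :=
  (\bigcup_(R <- enum Sym) \bigcup_(t <- finsupp (D R)) [fset a | a in (t : seq A)])%fset.

Definition subdb (D' D : db) : Prop :=
  forall R : Sym, (finsupp (D' R) `<=` finsupp (D R))%fset /\
    (forall t, t \in finsupp (D' R) -> D' R t = D R t).

(* key constraints: the key of R consists of its first (kl R) positions;
   Sigma contains exactly one key for each relation symbol in [rels]. *)
Definition sat_keys (kl : Sym -> nat) (rels : seq Sym) (D : db) : Prop :=
  forall R, R \in rels -> forall t1 t2, t1 \in finsupp (D R) -> t2 \in finsupp (D R) ->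
    take (kl R) (t1 : seq A) = take (kl R) (t2 : seq A) -> t1 = t2.

Definition repair (kl : Sym -> nat) (rels : seq Sym) (D D' : db) : Prop :=
  subdb D' D /\ sat_keys kl rels D' /\
  ~ (exists D'' : db, subdb D' D'' /\ ~ subdb D'' D' /\ subdb D'' D /\ sat_keys kl rels D'').
End DB.

Definition atom (Sym : finType) (ar : Sym -> nat) (V : choiceType) : Type :=
  {R : Sym & (ar R).-tuple V}.

Record cq (Sym : finType) (ar : Sym -> nat) (V : choiceType) := CQ {
  cq_bound : {fset V};
  cq_atoms : seq (atom ar V) }.

Definition self_join_free (Sym : finType) (ar : Sym -> nat) (V : choiceType) (q : cq ar V) : bool :=
  uniq [seq tag a | a <- cq_atoms q].

Definition cq_rels (Sym : finType) (ar : Sym -> nat) (V : choiceType) (q : cq ar V) : seq Sym := [seq tag a | a <- cq_atoms q].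

Definition cq_free_var (Sym : finType) (ar : Sym -> nat) (V : choiceType) (q : cq ar V) (x : V) : cq ar V :=
  CQ (cq_bound q `\ x)%fset (cq_atoms q).

Section Eval.
Variables (Sym : finType) (ar : Sym -> nat) (A V : choiceType) (K : comPzSemiRingType).

Definition extend (y : {fset V}) (alpha : V -> A) (D0 : {fset A})
  (f : {ffun y -> D0}) : V -> A :=
  fun v => if insub v is Some v' then val (f v') else alpha v.

Definition cq_value (q : cq ar V) (D : kdb ar A K) (alpha : V -> A) : K :=
  \sum_(f : {ffun cq_bound q -> adom D})
     \prod_(a <- cq_atoms q)
        D (tag a) (map_tuple (extend alpha f) (tagged a)).

Definition models (D : kdb ar A K) (alpha : V -> A) (q : cq ar V) : Prop :=
  cq_value q D alpha != 0.
End Eval.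

Definition upd (V : eqType) (A : Type) (g : V -> A) (x : V) (c : A) : V -> A :=
  fun v => if v == x then c else g v.

Section Attack.
Variables (Sym : finType) (ar : Sym -> nat) (V : choiceType) (kl : Sym -> nat).

Definition avars (a : atom ar V) : seq V := tagged a.
Definition akey (a : atom ar V) : seq V := take (kl (tag a)) (tagged a).
Definition anonkey (a : atom ar V) : seq V := drop (kl (tag a)) (tagged a).

Definition cq_vars (q : cq ar V) : seq V := flatten [seq avars a | a <- cq_atoms q].

Definition fd_holds (T : Type) (r : (V -> T) -> Prop) (X Y : seq V) : Prop :=
  forall t1 t2, r t1 -> r t2 -> (forall u, u \in X -> t1 u = t2 u) ->
    forall u, u \in Y -> t1 u = t2 u.

Definition fds_entail (Sigma : seq (seq V * seq V)) (X : seq V) (v : V) : Prop :=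
  forall (T : Type) (r : (V -> T) -> Prop),
    (forall fd, fd \in Sigma -> fd_holds r fd.1 fd.2) -> fd_holds r X [:: v].

Definition sigma_minus (q : cq ar V) (F : atom ar V) : seq (seq V * seq V) :=
  [seq (akey G, avars G) | G <- cq_atoms q & tag G != tag F].

Definition key_closure (q : cq ar V) (F : atom ar V) (v : V) : Prop :=
  v \in cq_vars q /\ fds_entail (sigma_minus q F) (akey F) v.

Definition cooccur (q : cq ar V) (u w : V) : bool :=
  has (fun G => (u \in avars G) && (w \in avars G)) (cq_atoms q).

Definition attacks (q : cq ar V) (F : atom ar V) (x : V) : Prop :=
  exists (x1 : V) (p : seq V),
    all (fun u => u \in cq_bound q) (x1 :: p) /\
    x1 \in anonkey F /\
    last x1 p = x /\
    path (cooccur q) x1 p /\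
    (forall u, u \in x1 :: p -> ~ key_closure q F u).

Definition unattacked (q : cq ar V) (x : V) : Prop :=
  forall F, F \in cq_atoms q -> ~ attacks q F x.
End Attack.

(* Call an embedding of q into a database t an assignment that agrees with gamma on the free
   variables and maps every atom of q to a fact of t, and its value at x an x-value of t.
   The heart of the proof is a swapping step: let theta embed q into a repair t, mapping the
   atom G to the fact fB, and replace fB by a key-equal fact fA of D.  Every x-value of the
   new repair t' is already an x-value of t: given an embedding mu into t' that uses fA,
   take theta on the variables attacked by G and mu elsewhere.  Since mu and theta agree on
   the key of G, key constraints force them to agree on the closure of that key, which is
   exactly what makes the glued assignment an embedding into t; and it keeps mu(x) because
   x is unattacked.  Swapping towards a repair s lacking the x-value c thus produces a
   repair whose x-values are x-values of t and miss c.  Iterating, the candidate values in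
   the finite active domain shrink until one value is an x-value of every repair. *)

From HB Require Import structures.
From mathcomp Require Import all_boot all_order all_algebra.
From mathcomp Require Import finmap.
From Stdlib Require Import Classical ClassicalEpsilon.
Set Implicit Arguments. Unset Strict Implicit. Unset Printing Implicit Defensive.
Import Order.TTheory GRing.Theory.
Local Open Scope ring_scope.
Local Open Scope fset_scope.

Lemma uniq_map_inj_in (T1 T2 : eqType) (f : T1 -> T2) (s : seq T1) :
  uniq (map f s) -> {in s &, injective f}.
Proof.
elim: s => //= a s IH /andP[nfa u] b c; rewrite !inE => /predU1P[->|bs] /predU1P[->|cs] // e.
- by case/negP: nfa; rewrite e map_f.
- by case/negP: nfa; rewrite -e map_f.
- exact: IH.
Qed.

Section Semiring.

Lemma sumr_neq0_ex (M : nmodType) (I : finType) (F : I -> M) :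
  \sum_i F i != 0 -> exists i, F i != 0.
Proof.
move=> nz; apply: NNPP => nF; move/eqP: nz; apply; apply: big1 => i _.
by apply/eqP/negPn/negP => Fi; apply: nF; exists i.
Qed.

Variables (K : comPzSemiRingType) (T : eqType) (s : seq T) (F : T -> K).

Lemma prodr_neq0_mem : \prod_(a <- s) F a != 0 -> {in s, forall a, F a != 0}.
Proof.
elim: s => // b s' IH; rewrite big_cons => nz a /predU1P[->|as'].
  by apply: contraNneq nz => ->; rewrite mul0r.
by apply: IH as'; apply: contraNneq nz => ->; rewrite mulr0.
Qed.

Hypothesis posK : positive_semiring K.

Lemma prodr_neq0_pos : (1 : K) != 0 -> {in s, forall a, F a != 0} -> \prod_(a <- s) F a != 0.
Proof.
move=> oneK; elim: s => [|b s' IH] nzF; first by rewrite big_nil.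
rewrite big_cons; apply/eqP => /posK.2 [/eqP|/eqP]; first by apply/negP/nzF/mem_head.
by apply/negP/IH => a as'; apply: nzF; rewrite inE as' orbT.
Qed.

Lemma sumr_neq0_pos (I : finType) (G : I -> K) i : G i != 0 -> \sum_j G j != 0.
Proof. by move=> Gi; rewrite (bigD1 i) //=; apply: contraNneq Gi => /posK.1 [-> _]. Qed.

End Semiring.

Section Facts.
Variables (K : comPzSemiRingType) (Sym : finType) (ar : Sym -> nat) (kl : Sym -> nat)
  (A : choiceType) (rels : seq Sym).
Notation db := (kdb ar A K).
Notation fact := (atom ar A).
Notation Fact := (Tagged (fun R => (ar R).-tuple A)).

Definition has_fact (t : db) (f : fact) : bool := tagged f \in finsupp (t (tag f)).

Definition keyeq (f g : fact) : Prop := tag f = tag g /\ akey kl f = akey kl g.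

(* Facts of relations outside [rels] carry no key: each forms a block on its own. *)
Definition blockeq (f g : fact) : Prop := f = g \/ (tag f \in rels /\ keyeq f g).

Lemma blockeq_refl f : blockeq f f.
Proof. by left. Qed.

Lemma blockeq_sym f g : blockeq f g -> blockeq g f.
Proof. by case=> [->|[r [e k]]]; [left | right; rewrite -e]. Qed.

Lemma blockeq_trans f g h : blockeq f g -> blockeq g h -> blockeq f h.
Proof.
case=> [->|[r [e1 k1]]] // [<-|[_ [e2 k2]]]; first by right.
by right; split; [|split; [rewrite e1 | rewrite k1]].
Qed.

Lemma blockeq_keyeq f g : blockeq f g -> keyeq f g.
Proof. by case=> [->|[]]. Qed.

Lemma sat_keysP (t : db) : sat_keys kl rels t <->
  (forall f g, has_fact t f -> has_fact t g -> blockeq f g -> f = g).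
Proof.
split=> [Hk [R u] [R' u'] mf mg [//|/= [Hr [/= eR]]]|Hk R Hr u u' mu mu' e].
  by subst R'; rewrite /akey /= => e; rewrite (Hk R Hr u u').
have /(congr1 (fun f : fact => tagged f : seq A)) /= :=
  Hk (Fact u) (Fact u') mu mu' (or_intror (conj Hr (conj erefl e))).
exact: val_inj.
Qed.

Definition dbfacts (t : db) : {fset fact} :=
  \bigcup_(R <- enum Sym) [fset Fact u | u in finsupp (t R)].

Lemma mem_dbfacts t f : (f \in dbfacts t) = has_fact t f.
Proof.
apply/bigfcupP/idP => [[R _ /imfsetP [u /= mu ->]] //|mf].
by exists (tag f); [rewrite mem_enum | apply/imfsetP; exists (tagged f); [|case: f {mf}]].
Qed.

Lemma subdbP (X Y D : db) : subdb X D -> subdb Y D ->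
  subdb X Y <-> (forall f, has_fact X f -> has_fact Y f).
Proof.
move=> HX HY; split=> [H [R u] /=|H R].
  by case: (H R) => /fsubsetP + _; apply.
have sub : (finsupp (X R) `<=` finsupp (Y R)) by apply/fsubsetP => u; apply: (H (Fact u)).
by split=> // u mu; rewrite (HX R).2 // (HY R).2 // (fsubsetP sub).
Qed.

Lemma subdb_has_fact (X D : db) f : subdb X D -> has_fact X f -> has_fact D f.
Proof. by case: f => R u /(_ R) [/fsubsetP + _]; apply. Qed.

Variable D : db.

Definition restrict (P : pred fact) : db :=
  fun R => [fsfun u in finsupp (D R) => if P (Fact u) then D R u else 0].

Lemma has_fact_restrict P f : has_fact (restrict P) f = has_fact D f && P f.
Proof.
case: f => R u; rewrite /has_fact /= !mem_finsupp /restrict fsfun_fun.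
case: ifP => [_|]; last by rewrite mem_finsupp eqxx => ->.
by case: (P _); rewrite ?eqxx ?andbT ?andbF.
Qed.

Lemma restrict_subdb P : subdb (restrict P) D.
Proof.
move=> R; split=> [|u].
  apply/fsubsetP => u mu.
  by have := has_fact_restrict P (Fact u); rewrite /has_fact /= mu => /esym /andP[].
by rewrite mem_finsupp /restrict fsfun_fun; case: ifP => _; [case: ifP|]; rewrite ?eqxx.
Qed.

Lemma has_fact_restrict_id (P : pred fact) f : (forall g, P g -> has_fact D g) ->
  has_fact (restrict P) f = P f.
Proof. by move=> PD; rewrite has_fact_restrict; case Pf: (P f); rewrite ?andbF ?PD. Qed.

Definition covered (t : db) (f : fact) : Prop := exists2 g, has_fact t g & blockeq f g.

Lemma repairP t : repair kl rels D t <->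
  [/\ subdb t D, sat_keys kl rels t & forall f, has_fact D f -> covered t f].
Proof.
split=> [[sub [keys max]]|[sub keys cov]]; last first.
  split=> //; split=> // [[D2 [tD2 [D2t [D2D keys2]]]]]; apply: D2t.
  apply/(subdbP D2D sub) => f mf; have [g mg fg] := cov f (subdb_has_fact D2D mf).
  have mg2 : has_fact D2 g by apply: (subdbP sub D2D).1.
  by rewrite ((sat_keysP D2).1 keys2 f g mf mg2 fg).
split=> // f mf; apply: NNPP => nf; apply: max.
pose P g := has_fact t g || (g == f).
have mP g : has_fact (restrict P) g = P g.
  by apply: has_fact_restrict_id => h /orP[/(subdb_has_fact sub)|/eqP->].
have sub2 := restrict_subdb P.
exists (restrict P); split; [|split; [|split=> //]].
- by apply/(subdbP sub sub2) => g mg; rewrite mP /P mg.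
- move/(subdbP sub2 sub)/(_ f); rewrite mP /P eqxx orbT => /(_ isT) mf'.
  by apply: nf; exists f => //; apply: blockeq_refl.
- apply/sat_keysP => g h; rewrite !mP => /orP[mg|/eqP->] /orP[mh|/eqP->] // gh.
  + exact: (sat_keysP t).1 keys g h mg mh gh.
  + by case: nf; exists g => //; apply: blockeq_sym.
  + by case: nf; exists h.
Qed.

Definition swap (t : db) (fB fA : fact) : db :=
  restrict (fun f => has_fact t f && (f != fB) || (f == fA)).

Lemma has_fact_swap t fB fA f : subdb t D -> has_fact D fA ->
  has_fact (swap t fB fA) f = has_fact t f && (f != fB) || (f == fA).
Proof.
move=> sub mA; apply: has_fact_restrict_id => g.
by case/orP=> [/andP[/(subdb_has_fact sub)]|/eqP->].
Qed.

Lemma repair_swap t fB fA : repair kl rels D t -> has_fact t fB ->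
  has_fact D fA -> blockeq fA fB -> repair kl rels D (swap t fB fA).
Proof.
case/repairP=> sub keys cov mB mA AB; have mS := has_fact_swap _ _ sub mA.
have keyB g : has_fact t g -> blockeq g fB -> g = fB.
  by move=> mg; apply: (sat_keysP t).1 keys g fB mg mB.
apply/repairP; split; first exact: restrict_subdb.
  apply/sat_keysP => g h; rewrite !mS.
  move=> /orP[/andP[mg ng]|/eqP->] /orP[/andP[mh nh]|/eqP->] // gh.
  + exact: (sat_keysP t).1 keys g h mg mh gh.
  + by move/eqP: ng; case; apply: keyB => //; apply: blockeq_trans gh AB.
  + by move/eqP: nh; case; apply: keyB => //; apply: blockeq_trans (blockeq_sym gh) AB.
move=> f /cov [g mg fg]; have [eB|ngB] := eqVneq g fB.
  by exists fA; subst g; [rewrite mS eqxx orbT | apply: blockeq_trans fg (blockeq_sym AB)].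
by exists g; rewrite // mS mg ngB.
Qed.

End Facts.

Section Attacks.
Variables (Sym : finType) (ar : Sym -> nat) (kl : Sym -> nat) (V : choiceType) (q : cq ar V).

Lemma attacks_bound G v : attacks kl q G v -> v \in cq_bound q.
Proof. by case=> x1 [p [/allP + [_ [<- _]]]]; apply; apply: mem_last. Qed.

Lemma attacks_nonkey G w : w \in anonkey kl G -> w \in cq_bound q ->
  ~ key_closure kl q G w -> attacks kl q G w.
Proof.
by move=> wG wb wc; exists w, [::]; rewrite /= wb; do !split=> //; move=> u /[!inE] /eqP->.
Qed.

Lemma attacks_cooccur G u H w : attacks kl q G u -> H \in cq_atoms q ->
  u \in avars H -> w \in avars H -> w \in cq_bound q -> ~ key_closure kl q G w ->
  attacks kl q G w.
Proof.
case=> x1 [p [bp [x1G [<- [pp pc]]]]] Hq uH wH wb wc.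
exists x1, (rcons p w); rewrite -rcons_cons all_rcons wb last_rcons rcons_path pp.
do !split=> //; first by apply/hasP; exists H; rewrite ?uH ?wH.
by move=> z; rewrite mem_rcons inE => /predU1P[->|]; [|apply: pc].
Qed.

Lemma mem_avars (G : atom ar V) w : (w \in avars G) = (w \in akey kl G) || (w \in anonkey kl G).
Proof. by rewrite -mem_cat cat_take_drop. Qed.

Lemma key_closure_key G w : G \in cq_atoms q -> w \in akey kl G -> key_closure kl q G w.
Proof.
move=> Gq wG; split=> [|T r _ t1 t2 _ _ e u /[!inE] /eqP->]; last exact: e.
apply/flattenP; exists (avars G); first exact: map_f.
by rewrite mem_avars wG.
Qed.

Lemma key_closure_agree (T : Type) G (th mu : V -> T) :
  {in akey kl G, th =1 mu} ->
  (forall H, H \in cq_atoms q -> tag H != tag G ->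
     {in akey kl H, th =1 mu} -> {in avars H, th =1 mu}) ->
  forall v, key_closure kl q G v -> th v = mu v.
Proof.
(* Entailment is semantic, so it may be tested on the two-row relation {th, mu}. *)
move=> agG agH v [_ /(_ T (fun s => s = th \/ s = mu))] entail.
have fds fd : fd \in sigma_minus kl q G -> fd_holds (fun s => s = th \/ s = mu) fd.1 fd.2.
  case/mapP=> H /[!mem_filter] /andP[HG Hq] -> t1 t2 /= [|] -> [|] -> e u uH //.
    exact: (agH H).
  by apply/esym/(agH H) => // z /e.
by apply: (entail fds th mu (or_introl erefl) (or_intror erefl) agG); rewrite inE.
Qed.

End Attacks.

Section Embeddings.
Variables (K : comPzSemiRingType) (Sym : finType) (ar kl : Sym -> nat) (A V : choiceType)
  (q : cq ar V) (gamma : V -> A) (x : V).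
Notation db := (kdb ar A K).
Notation rels := (cq_rels q).

Definition inst (th : V -> A) (G : atom ar V) : atom ar A :=
  Tagged (fun R => (ar R).-tuple A) (map_tuple th (tagged G)).

Lemma inst_eq_in th mu G : {in avars G, th =1 mu} -> inst th G = inst mu G.
Proof. by move=> e; rewrite /inst; congr Tagged; apply: val_inj; apply/eq_in_map. Qed.

Lemma akey_inst th G : akey kl (inst th G) = map th (akey kl G).
Proof. by rewrite /akey /= map_take. Qed.

Definition emb (t : db) (th : V -> A) : Prop :=
  (forall v, v \notin cq_bound q -> th v = gamma v) /\
  (forall G, G \in cq_atoms q -> has_fact t (inst th G)).

Definition xvalue (t : db) (c : A) : Prop := exists2 th, emb t th & th x = c.

Hypothesis sjf : self_join_free q.
Hypothesis unatt : unattacked kl q x.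

Lemma atom_tag_inj : {in cq_atoms q &, injective (@tag Sym _)}.
Proof. exact: uniq_map_inj_in sjf. Qed.

Section Transfer.
Variables (t : db) (th mu : V -> A) (G : atom ar V).
Hypotheses (keys : sat_keys kl rels t) (Gq : G \in cq_atoms q) (th_emb : emb t th).
Hypotheses (mu_free : forall v, v \notin cq_bound q -> mu v = gamma v)
  (mu_key : akey kl (inst mu G) = akey kl (inst th G))
  (mu_other : forall H, H \in cq_atoms q -> tag H != tag G -> has_fact t (inst mu H)).

Lemma key_closure_th_mu v : key_closure kl q G v -> th v = mu v.
Proof.
apply: key_closure_agree => [u uG|H Hq HG agK u uH].
  by move: mu_key; rewrite !akey_inst => /esym/eq_in_map; apply.
have thmuH : inst th H = inst mu H.
  apply: (sat_keysP _ _ _).1 keys _ _ (th_emb.2 H Hq) (mu_other Hq HG) _.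
  by right; split; [exact: map_f | split=> //; rewrite !akey_inst; apply/eq_in_map].
by move: (congr1 (fun f : atom ar A => tagged f : seq A) thmuH) => /eq_in_map; apply.
Qed.

Lemma th_mu_agree H w : H \in cq_atoms q -> w \in avars H -> ~ attacks kl q G w ->
  H = G \/ (exists2 u, u \in avars H & attacks kl q G u) -> th w = mu w.
Proof.
move=> Hq wH nw HG; have [wb|wf] := boolP (w \in cq_bound q); last first.
  by rewrite th_emb.1 // mu_free.
have [|nc] := classic (key_closure kl q G w); first exact: key_closure_th_mu.
case: nw; case: HG => [eHG|[u uH au]]; last exact: attacks_cooccur au Hq uH wH wb nc.
subst H; move: wH; rewrite (mem_avars kl) => /orP[wk|wk]; last exact: attacks_nonkey.
by case: nc; apply: key_closure_key.
Qed.

Definition glue (v : V) : A :=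
  if excluded_middle_informative (attacks kl q G v) then th v else mu v.

Lemma glue_attacked v : attacks kl q G v -> glue v = th v.
Proof. by rewrite /glue; case: excluded_middle_informative. Qed.

Lemma glue_unattacked v : ~ attacks kl q G v -> glue v = mu v.
Proof. by rewrite /glue; case: excluded_middle_informative. Qed.

Lemma emb_glue : emb t glue.
Proof.
split=> [v vb|H Hq].
  by rewrite glue_unattacked ?mu_free // => /attacks_bound; apply/negP.
have [aH|naH] := classic (exists2 u, u \in avars H & attacks kl q G u).
  rewrite (@inst_eq_in _ th) ?th_emb.2 // => w wH.
  have [aw|nw] := classic (attacks kl q G w); first exact: glue_attacked.
  by rewrite glue_unattacked //; apply/esym/(th_mu_agree Hq wH nw); right.
have glue_mu : {in avars H, glue =1 mu}.
  by move=> w wH; apply: glue_unattacked => aw; apply: naH; exists w.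
have [eHG|nHG] := eqVneq (tag H) (tag G); last by rewrite (inst_eq_in glue_mu) mu_other.
move/(atom_tag_inj Hq Gq): eHG => eHG; subst H.
rewrite (@inst_eq_in _ th) ?th_emb.2 // => w wG; rewrite glue_mu //.
by apply/esym/(th_mu_agree Gq wG); [move=> aw; apply: naH; exists w | left].
Qed.

Lemma glue_x : glue x = mu x.
Proof. exact/glue_unattacked/unatt. Qed.

End Transfer.

Lemma xvalue_transfer t th mu G fA : sat_keys kl rels t -> G \in cq_atoms q -> emb t th ->
  blockeq kl rels fA (inst th G) -> (forall v, v \notin cq_bound q -> mu v = gamma v) ->
  (forall H, H \in cq_atoms q -> has_fact t (inst mu H) \/ inst mu H = fA) ->
  xvalue t (mu x).
Proof.
move=> keys Gq th_emb /blockeq_keyeq [tagA keyA] mu_free mu_in.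
have tag_mu H : H \in cq_atoms q -> inst mu H = fA -> H = G.
  by move=> Hq e; apply: atom_tag_inj => //; rewrite -[tag H]/(tag (inst mu H)) e tagA.
have [eA|nA] := eqVneq (inst mu G) fA.
  exists (glue th mu G); [apply: emb_glue => // [|H Hq HG]|exact: glue_x].
    by rewrite eA.
  by case: (mu_in H Hq) => // /(tag_mu H Hq) eHG; rewrite eHG eqxx in HG.
exists mu => //; split=> // H Hq; case: (mu_in H Hq) => // e.
by move: nA; rewrite -(tag_mu H Hq e) e eqxx.
Qed.

End Embeddings.

Section Convergence.
Variables (K : comPzSemiRingType) (Sym : finType) (ar kl : Sym -> nat) (A V : choiceType)
  (q : cq ar V) (gamma : V -> A) (x : V) (D : kdb ar A K).
Hypotheses (sjf : self_join_free q) (unatt : unattacked kl q x).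
Notation rels := (cq_rels q).
Notation repair := (repair kl rels D).
Notation xvalue := (xvalue q gamma x).

Definition dist (s t : kdb ar A K) : nat := #|` dbfacts t `\` dbfacts s|.

Lemma xvalue_improve s t c : repair s -> ~ xvalue s c -> repair t -> xvalue t c ->
  exists t', [/\ repair t', (dist s t' < dist s t)%N & forall d, xvalue t' d -> xvalue t d].
Proof.
move=> rs nsc rt [th th_emb thx].
have [G Gq nsG] : exists2 G, G \in cq_atoms q & ~~ has_fact s (inst th G).
  apply: NNPP => nG; apply: nsc; exists th => //; split=> [|G Gq]; first exact: th_emb.1.
  by apply/negPn/negP => nsG; apply: nG; exists G.
have mB := th_emb.2 G Gq; set fB := inst th G in nsG mB.
have [sD _ cov] := (repairP _ _ _ _).1 rs; have [tD keys _] := (repairP _ _ _ _).1 rt.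
have [fA mA BA] := cov fB (subdb_has_fact tD mB); have mAD := subdb_has_fact sD mA.
exists (swap D t fB fA); split.
- exact: repair_swap rt mB mAD (blockeq_sym BA).
- have sub : dbfacts (swap D t fB fA) `\` dbfacts s `<=` (dbfacts t `\` dbfacts s) `\ fB.
    apply/fsubsetP => f; rewrite !in_fsetD !mem_dbfacts has_fact_swap // in_fset1.
    by case/andP=> nsf /orP[/andP[-> ->]|/eqP ef]; [rewrite nsf | rewrite ef mA in nsf].
  apply: leq_ltn_trans (fsubset_leq_card sub) (fproper_ltn_card (fproperD1 _)).
  by rewrite in_fsetD !mem_dbfacts mB nsG.
- move=> _ [mu mu_emb <-]; apply: (xvalue_transfer sjf unatt keys Gq th_emb (blockeq_sym BA)).
    exact: mu_emb.1.
  move=> H /mu_emb.2; rewrite has_fact_swap // => /orP[/andP[mH _]|/eqP eH]; [left|right] => //.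
Qed.

Lemma xvalue_avoid s t c : repair s -> ~ xvalue s c -> repair t ->
  exists t', [/\ repair t', ~ xvalue t' c & forall d, xvalue t' d -> xvalue t d].
Proof.
move=> rs nsc; have [n] := ubnP (dist s t); elim: n t => // n IH t lt_n rt.
have [tc|ntc] := classic (xvalue t c); last by exists t.
have [t' [rt' lt' sub']] := xvalue_improve rs nsc rt tc.
have [t'' [rt'' nt'' sub'']] := IH t' (leq_trans lt' (ltnSE lt_n)) rt'.
by exists t''; split=> // d /sub''/sub'.
Qed.

Lemma common_xvalue r0 : repair r0 ->
  (forall r, repair r -> exists2 c, c \in adom D & xvalue r c) ->
  exists2 c, c \in adom D & forall s, repair s -> xvalue s c.
Proof.
move=> rr0 xr; suff: forall (X : {fset A}) r, repair r ->
    (forall c, c \in adom D -> xvalue r c -> c \in X) ->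
    exists2 c, c \in adom D & forall s, repair s -> xvalue s c.
  by move=> /(_ (adom D) r0 rr0); apply=> c.
move=> X; have [n] := ubnP #|` X|; elim: n X => // n IH X lt_n r rr rX.
have [c cD rc] := xr r rr.
have [[s rs nsc]|all_c] := classic (exists2 s, repair s & ~ xvalue s c); last first.
  by exists c => // s rs; apply: NNPP => nsc; apply: all_c; exists s.
have [t [rt ntc sub]] := xvalue_avoid rs nsc rr.
apply: (IH (X `\ c) _ t rt) => [|d dD td].
  by move: lt_n; rewrite (cardfsD1 c) (rX c cD rc).
rewrite in_fsetD1 (rX d dD (sub d td)) andbT.
by apply/eqP => dc; apply: ntc; rewrite -dc.
Qed.

End Convergence.

Section Evaluation.
Variables (K : comPzSemiRingType) (Sym : finType) (ar : Sym -> nat) (A V : choiceType)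
  (q : cq ar V) (gamma : V -> A) (x : V).
Notation db := (kdb ar A K).
Notation emb := (emb q gamma).

Lemma models_oner_neq0 (t : db) al (Q : cq ar V) : models t al Q -> (1 : K) != 0.
Proof. by apply: contraNneq => oneK; rewrite -[cq_value _ _ _]mulr1 oneK mulr0. Qed.

Lemma has_fact_adom (t : db) th (G : atom ar V) v :
  has_fact t (inst th G) -> v \in avars G -> th v \in adom t.
Proof.
move=> mG vG; apply/bigfcupP; exists (tag G); rewrite ?mem_enum //.
apply/bigfcupP; exists (map_tuple th (tagged G)); rewrite ?andbT //.
by apply/imfsetP; exists (th v); rewrite //= map_f.
Qed.

Lemma adom_subdb (t D : db) : subdb t D -> {subset adom t <= adom D}.
Proof.
move=> tD a; rewrite /adom => /bigfcupP[R _ /bigfcupP[u /andP[mu _] au]].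
apply/bigfcupP; exists R; rewrite ?mem_enum //.
by apply/bigfcupP; exists u; rewrite // andbT (fsubsetP (tD R).1).
Qed.

Lemma models_emb (t : db) : x \in cq_bound q -> models t gamma q ->
  exists2 th, emb t th & th x \in adom t.
Proof.
rewrite /models /cq_value => xb /sumr_neq0_ex [f /prodr_neq0_mem nzf].
exists (extend gamma f); last by rewrite /extend; case: insubP => [u _ _|]; rewrite ?fsvalP ?xb.
split=> [v vb|G Gq]; first by rewrite /extend; case: insubP => // u; rewrite (negbTE vb).
by rewrite /has_fact mem_finsupp; apply: nzf.
Qed.

Lemma emb_models (t : db) th a0 : positive_semiring K -> (1 : K) != 0 -> emb t th ->
  a0 \in adom t -> models t (upd gamma x (th x)) (cq_free_var q x).
Proof.
move=> posK oneK [th_free th_atoms] a0t.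
(* [a0] is only a default: variables occurring in atoms are mapped into [adom t] by [th]. *)
pose f0 : {ffun cq_bound (cq_free_var q x) -> adom t} :=
  [ffun v => if insub (th (val v)) is Some w then w else [` a0t]].
apply: (sumr_neq0_pos posK (i := f0)); apply: prodr_neq0_pos => // G Gq.
have -> : map_tuple (extend (upd gamma x (th x)) f0) (tagged G) = map_tuple th (tagged G).
  apply: val_inj; apply/eq_in_map => v vG; rewrite /extend.
  case: insubP => [u _ uv|vb]; rewrite ?ffunE ?uv.
    by case: insubP => [w _ -> //|]; rewrite (has_fact_adom (th_atoms G Gq) vG).
  rewrite /upd; case: eqP => [->//|/eqP vx]; rewrite th_free //.
  by apply: contraNN vb; rewrite /= in_fsetD1 vx.
by move: (th_atoms G Gq); rewrite /has_fact mem_finsupp.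
Qed.

End Evaluation.

Theorem lemma4p13
  (K : comPzSemiRingType) (Sym : finType) (ar : Sym -> nat) (kl : Sym -> nat)
  (A V : choiceType)
  (q : cq ar V) (D : kdb ar A K) (gamma : V -> A) (x : V) :
  positive_semiring K -> naturally_ordered K ->
  self_join_free q ->
  adom D != fset0%fset ->
  (forall v, gamma v \in adom D) ->
  (forall D' : kdb ar A K, repair kl (cq_rels q) D D' -> models D' gamma q) ->
  x \in cq_bound q ->
  unattacked kl q x ->
  exists c : A, c \in adom D /\
    forall D' : kdb ar A K, repair kl (cq_rels q) D D' ->
      models D' (upd gamma x c) (cq_free_var q x).
Proof.
move=> posK _ sjf /fset0Pn [c0 c0D] _ all_models xb unatt.
have [[r0 rr0]|no_repair] := classic (exists r, repair kl (cq_rels q) D r); last first.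
  by exists c0; split=> // D' rD'; case: no_repair; exists D'.
have xvalue_adom r : repair kl (cq_rels q) D r ->
    exists2 c, c \in adom D & xvalue q gamma x r c.
  move=> rr; have [th th_emb thx] := models_emb xb (all_models r rr).
  by exists (th x); [apply: adom_subdb thx; case/repairP: rr | exists th].
have [c cD all_c] := common_xvalue sjf unatt rr0 xvalue_adom.
exists c; split=> // D' rD'; have [th th_emb <-] := all_c D' rD'.
have [th' _ a0] := models_emb xb (all_models D' rD').
exact: emb_models posK (models_oner_neq0 (all_models D' rD')) th_emb a0.
Qed.
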